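(* Let $P\in\mathbb{O}P^2$ and let $V_P=(A_0(P)\oplus A_1(P))\cap(\mathbb{R}I)^{\perp}\subset\mathfrak{h}^0_3(\mathbb{O})$ be the corresponding subspace, where $A_j(P)$ is the $j$-eigenspace of $X\mapsto P\circ X$ on $\mathfrak{h}_3(\mathbb{O})$. For $Z\in T_P\mathbb{O}P^2$ let $\hat Z\in\mathrm{Hom}(V_P,V_P^\perp)\oplus\mathrm{Hom}(V_P^\perp,V_P)$ be the derivative at $P$ in the direction $Z$ of the map $Q\mapsto \pi_{V_Q}$ (orthogonal projection of $\mathfrak{h}^0_3(\mathbb{O})$ onto $V_Q$). Then for every $Z\in T_P\mathbb{O}P^2$ and $X\in\mathfrak{h}^0_3(\mathbb{O})$, $$\hat Z(X)=-4\,Z\circ X+4\,Z\circ(P\circ X)+4\,P\circ(Z\circ X).$$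
   Context: $\mathfrak{h}_3(\mathbb{O})$ is the real vector space of hermitian $3\times3$ octonionic matrices with Jordan product $a\circ b=\frac12(ab+ba)$ and inner product $\langle a,b\rangle=\frac12\operatorname{tr}(a\circ b)$; $\mathfrak{h}^0_3(\mathbb{O})$ is the subspace of traceless matrices; $I$ is the identity matrix. $\mathbb{O}P^2=\{P\in\mathfrak{h}_3(\mathbb{O}):P\circ P=P,\ \operatorname{tr}P=1\}$. For $P\in\mathbb{O}P^2$, $\mathfrak{h}_3(\mathbb{O})=A_0(P)\oplus A_{1/2}(P)\oplus A_1(P)$ is the eigenspace decomposition of $X\mapsto P\circ X$, and $T_P\mathbb{O}P^2=\{Z:2P\circ Z=Z\}=A_{1/2}(P)$. The map $P\mapsto V_P$ identifies $\mathbb{O}P^2$ with the Grassmannian of $10$-dimensional subspaces $V\subset\mathfrak{h}^0_3(\mathbb{O})$ closed under the traceless Jordan product. *)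

From HB Require Import structures.
From mathcomp Require Import all_boot all_order all_algebra.
From mathcomp Require Import all_classical all_reals all_analysis.
From Stdlib Require Import ClassicalEpsilon.
Set Implicit Arguments. Unset Strict Implicit. Unset Printing Implicit Defensive.
Import Order.TTheory GRing.Theory Num.Theory.
Import numFieldNormedType.Exports.
Local Open Scope ring_scope.

Section Octonions.
Variable R : realType.

(* Cayley--Dickson doubling (Wikipedia convention):
   (a,b)(c,d) = (a c - conj(d) b, d a + b conj(c)),  conj(a,b) = (conj a, -b). *)
Definition cd_mul (A : zmodType) (mul : A -> A -> A) (cj : A -> A)
  (x y : A * A) : A * A :=
  (mul x.1 y.1 - mul (cj y.2) x.2, mul y.2 x.1 + mul x.2 (cj y.1)).
Definition cd_conj (A : zmodType) (cj : A -> A) (x : A * A) : A * A :=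
  (cj x.1, - x.2).

Definition cpx := (R * R)%type.
Definition quat := (cpx * cpx)%type.
Definition oct := (quat * quat)%type.

Definition conjC' : cpx -> cpx := cd_conj (fun r : R => r).
Definition mulC' : cpx -> cpx -> cpx := cd_mul ( *%R : R -> R -> R) (fun r : R => r).
Definition conjH : quat -> quat := cd_conj conjC'.
Definition mulH : quat -> quat -> quat := cd_mul mulC' conjC'.
Definition conjO : oct -> oct := cd_conj conjH.
Definition mulO : oct -> oct -> oct := cd_mul mulH conjH.

Definition oneO : oct := (((1 : R), (0 : R)), (0 : cpx), (0 : quat)).
Definition reO (x : oct) : R := x.1.1.1.

Definition omat := 'M[oct]_3.

Definition omul (A B : omat) : omat :=
  \matrix_(i, j) \sum_(k < 3) mulO (A i k) (B k j).

Definition oscale (r : R) (A : omat) : omat := map_mx (fun x : oct => r *: x) A.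

Definition jordan (A B : omat) : omat := oscale 2^-1 (omul A B + omul B A).

Definition hermitian (A : omat) : Prop := forall i j, A j i = conjO (A i j).

Definition Id3 : omat := \matrix_(i, j) (if i == j then oneO else 0).

Definition otr (A : omat) : R := \sum_(i < 3) reO (A i i).

Definition oinner (A B : omat) : R := 2^-1 * otr (jordan A B).

Definition h30 (X : omat) : Prop := hermitian X /\ otr X = 0.

Definition OP2 (P : omat) : Prop := hermitian P /\ jordan P P = P /\ otr P = 1.

Definition eigsp (P : omat) (l : R) (X : omat) : Prop :=
  hermitian X /\ jordan P X = oscale l X.

(* T_P OP^2 = {Z in h_3(O) : 2 P o Z = Z} = A_{1/2}(P) *)
Definition tangentOP2 (P Z : omat) : Prop :=
  hermitian Z /\ oscale 2%:R (jordan P Z) = Z.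

Definition VP (P : omat) (X : omat) : Prop :=
  (exists X0 X1, eigsp P 0 X0 /\ eigsp P 1 X1 /\ X = X0 + X1)
  /\ oinner X Id3 = 0.

Definition oproj (V : omat -> Prop) (X : omat) : omat :=
  epsilon (inhabits (0 : omat))
    (fun Y => V Y /\ forall W, V W -> oinner (X - Y) W = 0).

(* derivative at t = 0 of a curve of octonionic matrices (entrywise;
   oct is a finite product of copies of R, hence a normed R-module) *)
Definition curve_deriv0 (g : R -> omat) (D : omat) : Prop :=
  forall i j, is_derive (0 : R) (1 : R) (fun t => g t i j) (D i j).

End Octonions.

(* Write L for X |-> P o X.  Putting a = P idempotent in the linearized Jordan identity
   (a o a^2) o x + 2 a o (a o (a o x)) = 3 a^2 o (a o x) gives the Peirce relation
   2 L^3 - 3 L^2 + L = 0, so X - 4 P o X + 4 P o (P o X) = (2L^2 - 3L + 1) X + (2L^2 - L) X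
   is the sum of a 0- and a 1-eigenvector of L.  For traceless X it is orthogonal to I,
   since tr((P o P) o X) = tr(P o (P o X)), and the remainder 4 (L - L^2) X is orthogonal to
   A_0(P) + A_1(P) because L is self-adjoint for the trace form.  The trace form is positive
   definite, so this is the orthogonal projection onto V_P, and differentiating
   pi_{V_Q} X = X - 4 Q o X + 4 Q o (Q o X) along a curve through P with velocity Z gives the
   formula.  The two identities of h_3(O) used, the one above and associativity of the trace
   form, are polynomial identities in the coordinates of generic hermitian matrices; they are
   checked with the ring normaliser of Ring_polynom. *)

From Pilot Require Import Defs.
From Stdlib Require Import ZArith Ring_polynom Ring_theory BinList ClassicalEpsilon.
From HB Require Import structures.
From mathcomp Require Import all_boot all_order all_algebra.
From mathcomp Require Import all_classical all_reals all_analysis.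
From mathcomp Require Import ring lra.
From mathcomp.algebra_tactics Require Import common.
From mathcomp.zify Require Import ssrZ.
Set Implicit Arguments. Unset Strict Implicit. Unset Printing Implicit Defensive.
Import Order.TTheory GRing.Theory Num.Theory.
Import numFieldNormedType.Exports.
Local Open Scope ring_scope.
(* [mulO] and [hermitian] are also MathComp names (Landau notation, sesquilinear forms). *)
Local Notation mulO := Defs.mulO.
Local Notation hermitian := Defs.hermitian.

(** * Octonions and octonionic matrices *)

Section OctonionAlgebra.
Variable R : realType.
Implicit Types (x y z : oct R) (r : R).

Lemma oct_ext x y :
  x.1.1.1 = y.1.1.1 -> x.1.1.2 = y.1.1.2 -> x.1.2.1 = y.1.2.1 -> x.1.2.2 = y.1.2.2 ->
  x.2.1.1 = y.2.1.1 -> x.2.1.2 = y.2.1.2 -> x.2.2.1 = y.2.2.1 -> x.2.2.2 = y.2.2.2 -> x = y.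
Proof.
case: x y => [[[? ?] [? ?]] [[? ?] [? ?]]] [[[? ?] [? ?]] [[? ?] [? ?]]] /=.
by move=> -> -> -> -> -> -> -> ->.
Qed.

Ltac oct_ring := apply: oct_ext; rewrite /= /GRing.scale /=; ring.

Lemma mulODl x y z : mulO (x + y) z = mulO x z + mulO y z. Proof. oct_ring. Qed.
Lemma mulODr x y z : mulO x (y + z) = mulO x y + mulO x z. Proof. oct_ring. Qed.
Lemma mulOZl r x y : mulO (r *: x) y = r *: mulO x y. Proof. oct_ring. Qed.
Lemma mulOZr r x y : mulO x (r *: y) = r *: mulO x y. Proof. oct_ring. Qed.
Lemma mulO1l x : mulO (oneO R) x = x. Proof. oct_ring. Qed.
Lemma mulO1r x : mulO x (oneO R) = x. Proof. oct_ring. Qed.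
Lemma mulO0l x : mulO 0 x = 0. Proof. oct_ring. Qed.
Lemma mulO0r x : mulO x 0 = 0. Proof. oct_ring. Qed.
Lemma conjO_mul x y : conjO (mulO x y) = mulO (conjO y) (conjO x). Proof. oct_ring. Qed.
Lemma conjOD x y : conjO (x + y) = conjO x + conjO y. Proof. oct_ring. Qed.
Lemma conjON x : conjO (- x) = - conjO x. Proof. oct_ring. Qed.
Lemma conjOZ r x : conjO (r *: x) = r *: conjO x. Proof. oct_ring. Qed.
Lemma conjO0 : conjO 0 = 0 :> oct R. Proof. oct_ring. Qed.

Definition oct_norm2 x : R :=
  x.1.1.1 ^+ 2 + x.1.1.2 ^+ 2 + x.1.2.1 ^+ 2 + x.1.2.2 ^+ 2 +
  x.2.1.1 ^+ 2 + x.2.1.2 ^+ 2 + x.2.2.1 ^+ 2 + x.2.2.2 ^+ 2.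

Lemma reO_mul_conj x : reO (mulO x (conjO x)) = oct_norm2 x.
Proof. rewrite /reO /oct_norm2 /=; ring. Qed.

Lemma oct_norm2_ge0 x : 0 <= oct_norm2 x.
Proof. rewrite /oct_norm2; nra. Qed.

Lemma oct_norm2_eq0 x : oct_norm2 x = 0 -> x = 0.
Proof.
case: x => [[[a b] [c d]] [[e f] [g h]]]; rewrite /oct_norm2 /= => H.
by apply: oct_ext => /=; nra.
Qed.

Lemma conjO_self_real x : conjO x = x -> x = (((reO x, 0), (0, 0)), ((0, 0), (0, 0))).
Proof.
case: x => [[[a b] [c d]] [[e f] [g h]]] [] /= *.
by apply: oct_ext; rewrite /reO /=; lra.
Qed.
End OctonionAlgebra.

Ltac omat_lin :=
  apply/matrixP => i j; rewrite !mxE; apply: oct_ext; rewrite /= /GRing.scale /=; lra.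

Section OctMatrices.
Variable R : realType.
Implicit Types (A B C D M X : omat R) (r s : R).

Lemma omulDl A B C : omul (A + B) C = omul A C + omul B C.
Proof.
by apply/matrixP => i j; rewrite !mxE -big_split; apply: eq_bigr => k _; rewrite mxE mulODl.
Qed.
Lemma omulDr A B C : omul A (B + C) = omul A B + omul A C.
Proof.
by apply/matrixP => i j; rewrite !mxE -big_split; apply: eq_bigr => k _; rewrite mxE mulODr.
Qed.
Lemma omulZl r A B : omul (oscale r A) B = oscale r (omul A B).
Proof.
by apply/matrixP => i j; rewrite !mxE scaler_sumr; apply: eq_bigr => k _; rewrite mxE mulOZl.
Qed.
Lemma omulZr r A B : omul A (oscale r B) = oscale r (omul A B).
Proof.
by apply/matrixP => i j; rewrite !mxE scaler_sumr; apply: eq_bigr => k _; rewrite mxE mulOZr.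
Qed.

Lemma oscaleD r A B : oscale r (A + B) = oscale r A + oscale r B.
Proof. by apply/matrixP => i j; rewrite !mxE scalerDr. Qed.
Lemma oscaleA r s A : oscale r (oscale s A) = oscale (r * s) A.
Proof. by apply/matrixP => i j; rewrite !mxE scalerA. Qed.

Lemma oscale1 A : oscale 1 A = A.
Proof. by apply/matrixP => i j; rewrite !mxE scale1r. Qed.
Lemma oscaler0 r : oscale r 0 = 0 :> omat R.
Proof. by apply/matrixP => i j; rewrite !mxE scaler0. Qed.

Lemma omul0r A : omul A 0 = 0.
Proof. by apply/matrixP => i j; rewrite !mxE big1 // => k _; rewrite mxE mulO0r. Qed.
Lemma omul0l A : omul 0 A = 0.
Proof. by apply/matrixP => i j; rewrite !mxE big1 // => k _; rewrite mxE mulO0l. Qed.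

Lemma jordanC A B : jordan A B = jordan B A.
Proof. by rewrite /jordan addrC. Qed.
Lemma jordanDr A B C : jordan A (B + C) = jordan A B + jordan A C.
Proof. by rewrite /jordan omulDl omulDr addrACA -oscaleD. Qed.
Lemma jordan0r A : jordan A 0 = 0.
Proof. by rewrite /jordan omul0r omul0l addr0 oscaler0. Qed.
Lemma jordanZr r A B : jordan A (oscale r B) = oscale r (jordan A B).
Proof. by rewrite /jordan omulZl omulZr -oscaleD !oscaleA mulrC. Qed.

Lemma omul_Id3 M : omul M (Id3 R) = M.
Proof.
apply/matrixP => i j; rewrite mxE (bigD1 j) //= big1 => [|k /negbTE kj].
  by rewrite !mxE eqxx mulO1r addr0.
by rewrite !mxE kj mulO0r.
Qed.
Lemma Id3_omul M : omul (Id3 R) M = M.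
Proof.
apply/matrixP => i j; rewrite mxE (bigD1 i) //= big1 => [|k /negbTE ki].
  by rewrite !mxE eqxx mulO1l addr0.
by rewrite !mxE eq_sym ki mulO0l.
Qed.
Lemma jordan_Id3 M : jordan M (Id3 R) = M.
Proof. rewrite /jordan omul_Id3 Id3_omul; omat_lin. Qed.

Lemma otrD A B : otr (A + B) = otr A + otr B.
Proof. by rewrite /otr -big_split; apply: eq_bigr => i _; rewrite mxE. Qed.
Lemma otrN A : otr (- A) = - otr A.
Proof. by rewrite /otr -sumrN; apply: eq_bigr => i _; rewrite mxE. Qed.
Lemma otrZ r A : otr (oscale r A) = r * otr A.
Proof. by rewrite /otr mulr_sumr; apply: eq_bigr => i _; rewrite mxE. Qed.

Lemma hermitianD A B : hermitian A -> hermitian B -> hermitian (A + B).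
Proof. by move=> hA hB i j; rewrite !mxE hA hB conjOD. Qed.
Lemma hermitianN A : hermitian A -> hermitian (- A).
Proof. by move=> hA i j; rewrite !mxE hA conjON. Qed.
Lemma hermitianZ r A : hermitian A -> hermitian (oscale r A).
Proof. by move=> hA i j; rewrite !mxE hA conjOZ. Qed.
Lemma hermitianB A B : hermitian A -> hermitian B -> hermitian (A - B).
Proof. by move=> hA hB; apply/hermitianD/hermitianN. Qed.

Lemma conjO_omul A B i j : hermitian A -> hermitian B ->
  conjO (omul A B i j) = omul B A j i.
Proof.
move=> hA hB; rewrite !mxE (big_morph _ (@conjOD R) (@conjO0 R)).
by apply: eq_bigr => k _; rewrite conjO_mul -hA -hB.
Qed.
Lemma hermitian_jordan A B : hermitian A -> hermitian B -> hermitian (jordan A B).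
Proof.
move=> hA hB; apply: hermitianZ => i j.
have addE (M N : omat R) k l : (M + N) k l = M k l + N k l by rewrite mxE.
by rewrite 2!addE conjOD !conjO_omul // addrC.
Qed.

Lemma otr_omul_self D : hermitian D ->
  otr (omul D D) = \sum_(i < 3) \sum_(k < 3) oct_norm2 (D i k).
Proof.
move=> hD; apply: eq_bigr => i _; rewrite mxE (big_morph (@reO R) (fun _ _ => erefl) erefl).
by apply: eq_bigr => k _; rewrite (hD i k) reO_mul_conj.
Qed.

Lemma hermitian_otr_sqr_eq0 D : hermitian D -> otr (jordan D D) = 0 -> D = 0.
Proof.
move=> hD trDD; apply/matrixP => i k; rewrite mxE; apply: oct_norm2_eq0.
have norms0 : \sum_(i < 3) \sum_(k < 3) oct_norm2 (D i k) = 0.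
  by move: trDD; rewrite otrZ otrD otr_omul_self //; lra.
have rows0 := psumr_eq0P (fun i _ => sumr_ge0 _ (fun k _ => oct_norm2_ge0 (D i k))) norms0.
exact: psumr_eq0P (fun k _ => oct_norm2_ge0 (D i k)) (rows0 i isT) k isT.
Qed.
End OctMatrices.

(** * Symbolic verification of two identities of h_3(O) *)

Lemma binlist_nth_succ (A : Type) (d : A) (p : positive) (l : seq A) :
  BinList.nth d (Pos.succ p) l = BinList.nth d p (behead l).
Proof.
rewrite nth_jump; elim: p l => [p IHp|p _|] l //=.
- by rewrite IHp jump_succ /= jump_tl.
- by rewrite -jump_tl nth_jump.
Qed.

Lemma binlist_nth_of_succ_nat (A : Type) (d : A) (l : seq A) n :
  BinList.nth d (Pos.of_succ_nat n) l = nth d l n.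
Proof.
elim: n l => [|n IHn] l /=; first by case: l.
by rewrite binlist_nth_succ IHn; case: l => [|x l] //=; rewrite nth_nil.
Qed.

(* The Cayley-Dickson doubling of Defs over a carrier without zmodType structure:
   polynomials in Horner form are only equal up to [Peq]. *)
Record alg_ops (T : Type) := AlgOps {
  op_add : T -> T -> T; op_opp : T -> T; op_mul : T -> T -> T; op_conj : T -> T }.

Definition cd_ops T (o : alg_ops T) : alg_ops (T * T) :=
  AlgOps (fun x y => (op_add o x.1 y.1, op_add o x.2 y.2))
    (fun x => (op_opp o x.1, op_opp o x.2))
    (fun x y => (op_add o (op_mul o x.1 y.1) (op_opp o (op_mul o (op_conj o y.2) x.2)),
                 op_add o (op_mul o y.2 x.1) (op_mul o x.2 (op_conj o y.1))))
    (fun x => (op_conj o x.1, op_opp o x.2)).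

Definition alg_morph T (A : zmodType) (o : alg_ops T) (mul : A -> A -> A) (cj : A -> A)
    (f : T -> A) : Prop :=
  [/\ {morph f : x y / op_add o x y >-> x + y}, {morph f : x / op_opp o x >-> - x},
      {morph f : x y / op_mul o x y >-> mul x y} & {morph f : x / op_conj o x >-> cj x}].

Definition pair_map T A (f : T -> A) (x : T * T) : A * A := (f x.1, f x.2).

Lemma cd_alg_morph T (A : zmodType) (o : alg_ops T) mul cj (f : T -> A) :
  alg_morph o mul cj f -> alg_morph (cd_ops o) (cd_mul mul cj) (cd_conj cj) (pair_map f).
Proof. by case=> fD fN fM fC; split=> [x y|x|x y|x]; rewrite /pair_map /= ?fD ?fN ?fM ?fC. Qed.

Notation zpol := (Pol Z).

Definition zpol_ops : alg_ops zpol :=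
  AlgOps (Padd Z0 Z.add Z.eqb) (Popp Z.opp) (Pmul Z0 (Zpos xH) Z.add Z.mul Z.eqb) id.
Definition zpol0 : zpol := Pc Z0.
(* 0-based, whereas Ring_polynom numbers variables from 1. *)
Definition zvar (n : nat) : zpol := mk_X Z0 (Zpos xH) (Pos.of_succ_nat n).

Section ZpolEval.
Variables (R : comPzRingType) (env : seq R).

Definition zeval : zpol -> R := Pphi 0 +%R *%R (fun z => (int_of_Z z)%:~R) env.

Let R_ARth := Rth_ARth (Eqsth R) (Eq_ext _ _ _) (RR R).

Lemma zeval_morph : alg_morph zpol_ops *%R id zeval.
Proof.
split=> [p q|p|p q|p] //.
- exact: (Padd_ok (Eqsth R) (Eq_ext _ _ _) R_ARth (RZ R) q p env).
- exact: (Popp_ok (Eqsth R) (Eq_ext _ _ _) R_ARth (RZ R) p env).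
- exact: (Pmul_ok (Eqsth R) (Eq_ext _ _ _) R_ARth (RZ R) p q env).
Qed.

Lemma zeval_var n : zeval (zvar n) = nth 0 env n.
Proof.
rewrite -binlist_nth_of_succ_nat.
exact: esym (mkX_ok (Eqsth R) (Eq_ext _ _ _) R_ARth (RZ R) _ env).
Qed.

Lemma zeval_eq0 p : Ring_polynom.Peq Z.eqb p zpol0 -> zeval p = 0.
Proof. by move/(Peq_ok (Eqsth R) (Eq_ext _ _ _) (RZ R)) => E; rewrite /zeval E. Qed.
End ZpolEval.

Definition zoct := (((zpol * zpol) * (zpol * zpol)) * ((zpol * zpol) * (zpol * zpol)))%type.
Definition zoct_ops : alg_ops zoct := cd_ops (cd_ops (cd_ops zpol_ops)).

Section ZoctEval.
Variable R : realType.

Definition zoct_eval (env : seq R) : zoct -> oct R := pair_map (pair_map (pair_map (zeval env))).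

Lemma zoct_eval_morph env : alg_morph zoct_ops (@mulO R) (@conjO R) (zoct_eval env).
Proof. exact/cd_alg_morph/cd_alg_morph/cd_alg_morph/zeval_morph. Qed.
End ZoctEval.

Definition zoct_real (c : zpol) : zoct :=
  (((c, zpol0), (zpol0, zpol0)), ((zpol0, zpol0), (zpol0, zpol0))).
Definition zoct0 : zoct := zoct_real zpol0.
Definition zoct_of (v : nat -> zpol) (n : nat) : zoct :=
  (((v n, v n.+1), (v n.+2, v n.+3)), ((v n.+4, v n.+4.+1), (v n.+4.+2, v n.+4.+3))).

Definition smx := seq (seq zoct).
Definition sentry (A : smx) (i j : nat) : zoct := nth zoct0 (nth [::] A i) j.
Definition smx_of (f : nat -> nat -> zoct) : smx := mkseq (fun i => mkseq (f i) 3) 3.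
Definition sadd (A B : smx) : smx :=
  smx_of (fun i j => op_add zoct_ops (sentry A i j) (sentry B i j)).
Definition sopp (A : smx) : smx := smx_of (fun i j => op_opp zoct_ops (sentry A i j)).
Definition smul (A B : smx) : smx := smx_of (fun i j =>
  op_add zoct_ops (op_mul zoct_ops (sentry A i 0) (sentry B 0 j))
    (op_add zoct_ops (op_mul zoct_ops (sentry A i 1) (sentry B 1 j))
       (op_mul zoct_ops (sentry A i 2) (sentry B 2 j)))).
Definition sjordan2 (A B : smx) : smx := sadd (smul A B) (smul B A).

Definition sherm (v : nat -> zpol) : smx :=
  let x01 := zoct_of v 3 in let x02 := zoct_of v 11 in let x12 := zoct_of v 19 in
  let cj := op_conj zoct_ops in
  [:: [:: zoct_real (v 0); x01; x02];
      [:: cj x01; zoct_real (v 1); x12];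
      [:: cj x02; cj x12; zoct_real (v 2)]].

Definition pair_all T (p : T -> bool) (x : T * T) : bool := p x.1 && p x.2.
Definition zoct_is0 : zoct -> bool :=
  pair_all (pair_all (pair_all (fun q => Ring_polynom.Peq Z.eqb q zpol0))).
Definition smx_is0 (A : smx) : bool := all (all zoct_is0) A.

Definition strace (A : smx) : zpol :=
  op_add zpol_ops (sentry A 0 0).1.1.1
    (op_add zpol_ops (sentry A 1 1).1.1.1 (sentry A 2 2).1.1.1).

Lemma pair_map_eq0 T (A : zmodType) (p : T -> bool) (f : T -> A) :
  (forall y, p y -> f y = 0) -> forall x, pair_all p x -> pair_map f x = 0.
Proof. by move=> f0 x /andP[/f0 + /f0]; rewrite /pair_map => -> ->. Qed.

Section SymbolicMatrices.
Variable R : realType.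
Implicit Types (A B M X : omat R) (SA SB : smx) (env : seq R).

Definition represents env M SA := forall i j : 'I_3, M i j = zoct_eval env (sentry SA i j).

Lemma sentry_smx_of f (i j : 'I_3) : sentry (smx_of f) i j = f i j.
Proof. by case: i j => [[|[|[|//]]] ?] [[|[|[|//]]] ?]. Qed.

Section Represents.
Variable env : seq R.
Let morph := zoct_eval_morph env.

Lemma represents_add M X SA SB :
  represents env M SA -> represents env X SB -> represents env (M + X) (sadd SA SB).
Proof. by case: morph => hD _ _ _ hM hX i j; rewrite sentry_smx_of hD mxE hM hX. Qed.

Lemma represents_opp M SA : represents env M SA -> represents env (- M) (sopp SA).
Proof. by case: morph => _ hN _ _ hM i j; rewrite sentry_smx_of hN mxE hM. Qed.

Lemma represents_omul M X SA SB :
  represents env M SA -> represents env X SB -> represents env (omul M X) (smul SA SB).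
Proof.
case: morph => hD _ hM _ hMA hXB i j.
rewrite sentry_smx_of; cbv beta.
by rewrite !hD !hM mxE !big_ord_recl big_ord0 addr0 !hMA !hXB.
Qed.

(* [sjordan2] represents twice the Jordan product (coefficients are integers); the scalars
   record the accumulated powers of 2. *)
Lemma represents_jordan r s M X SA SB :
  represents env (oscale r M) SA -> represents env (oscale s X) SB ->
  represents env (oscale (2 * (r * s)) (jordan M X)) (sjordan2 SA SB).
Proof.
move=> hM hX; suff -> : oscale (2 * (r * s)) (jordan M X) =
    omul (oscale r M) (oscale s X) + omul (oscale s X) (oscale r M).
  by apply: represents_add; apply: represents_omul.
rewrite /jordan !(omulZl, omulZr) !oscaleA [s * r]mulrC -oscaleD.
by congr oscale; field.
Qed.

Lemma zoct_eval_eq0 x : zoct_is0 x -> zoct_eval env x = 0.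
Proof. exact/pair_map_eq0/pair_map_eq0/pair_map_eq0/zeval_eq0. Qed.

Lemma represents_eq0 M SA : represents env M SA -> smx_is0 SA -> M = 0.
Proof.
move=> hM /(all_nthP [::]) SA0; apply/matrixP => i j; rewrite hM mxE; apply: zoct_eval_eq0.
have row0 : all zoct_is0 (nth [::] SA i).
  by case: (ltnP i (size SA)) => [/SA0 // | /(nth_default [::]) ->].
rewrite /sentry; case: (ltnP j (size (nth [::] SA i))) => [|/(nth_default zoct0) -> //].
exact: (all_nthP zoct0 row0).
Qed.
End Represents.
End SymbolicMatrices.

Section HermitianCoordinates.
Variable R : realType.
Implicit Types (M : omat R) (env : seq R).

Local Notation o0 := (@Ordinal 3 0 isT).
Local Notation o1 := (@Ordinal 3 1 isT).
Local Notation o2 := (@Ordinal 3 2 isT).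

Lemma ord3P (i : 'I_3) : [\/ i = o0, i = o1 | i = o2].
Proof.
by case: i => [[|[|[|//]]] ?]; [constructor 1 | constructor 2 | constructor 3]; apply: val_inj.
Qed.

Definition oct_coords (x : oct R) : seq R :=
  [:: x.1.1.1; x.1.1.2; x.1.2.1; x.1.2.2; x.2.1.1; x.2.1.2; x.2.2.1; x.2.2.2].

Definition herm_coords M : seq R :=
  [:: reO (M o0 o0); reO (M o1 o1); reO (M o2 o2)]
  ++ oct_coords (M o0 o1) ++ oct_coords (M o0 o2) ++ oct_coords (M o1 o2).

Lemma represents_sherm env M (v : nat -> zpol) : hermitian M ->
  (forall k, (k < 27)%N -> zeval env (v k) = nth 0 (herm_coords M) k) ->
  represents env M (sherm v).
Proof.
move=> hM hv i j; have [_ _ _ morphC] := zoct_eval_morph env.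
have diag k : M k k = (((reO (M k k), 0), (0, 0)), ((0, 0), (0, 0))).
  exact: conjO_self_real (esym (hM k k)).
have lower k l n : M k l = zoct_eval env (zoct_of v n) ->
    M l k = zoct_eval env (op_conj zoct_ops (zoct_of v n)).
  by move=> E; rewrite hM E morphC.
have zeval0 : zeval env zpol0 = 0 by exact: zeval_eq0.
have e01 : M o0 o1 = zoct_eval env (zoct_of v 3) by apply: oct_ext; rewrite /= hv.
have e02 : M o0 o2 = zoct_eval env (zoct_of v 11) by apply: oct_ext; rewrite /= hv.
have e12 : M o1 o2 = zoct_eval env (zoct_of v 19) by apply: oct_ext; rewrite /= hv.
case: (ord3P i) => ->; case: (ord3P j) => ->; rewrite /sentry /= //;
  try by [apply: lower | rewrite diag; apply: oct_ext; rewrite /= ?zeval0 ?hv].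
Qed.

Lemma represents_sherm_at (pre post : seq R) M : hermitian M ->
  represents (pre ++ herm_coords M ++ post) (oscale 1 M) (sherm (fun k => zvar (size pre + k))).
Proof.
rewrite oscale1 => hM; apply: represents_sherm => // k k27.
have size27 : size (herm_coords M) = 27 by [].
by rewrite zeval_var nth_cat ltnNge leq_addr addKn nth_cat size27 k27.
Qed.

Lemma otr_represents env r M SA :
  represents env (oscale r M) SA -> r * otr M = zeval env (strace SA).
Proof.
have [hD _ _ _] := zeval_morph env.
by move=> hM; rewrite -otrZ /otr /strace !hD !big_ord_recl big_ord0 addr0 !hM.
Qed.
End HermitianCoordinates.

Definition cube_defect T (add : T -> T -> T) (opp : T -> T) (j2 : T -> T -> T) (a x : T) : T :=
  let a2 := j2 a a in let ax := j2 a x in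
  let t := j2 a (j2 a ax) in let u := j2 a2 ax in
  add (add (j2 (j2 a a2) x) (add t t)) (opp (add u (add u u))).

Lemma sherm_cube_defect_is0 :
  smx_is0 (cube_defect sadd sopp sjordan2 (sherm zvar) (sherm (fun k => zvar (27 + k)))).
Proof. by vm_compute. Qed.

Definition trace_assoc_defect (a b c : smx) : zpol :=
  op_add zpol_ops (strace (sjordan2 (sjordan2 a b) c))
    (op_opp zpol_ops (strace (sjordan2 a (sjordan2 b c)))).

Lemma sherm_trace_assoc_defect_is0 :
  Ring_polynom.Peq Z.eqb (trace_assoc_defect (sherm zvar) (sherm (fun k => zvar (27 + k)))
                            (sherm (fun k => zvar (54 + k)))) zpol0.
Proof. by vm_compute. Qed.

Section JordanIdentities.
Variable R : realType.
Implicit Types (a b c x : omat R).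

Lemma jordan_cube_identity a x : hermitian a -> hermitian x ->
  oscale 2 (jordan a (jordan a (jordan a x))) + jordan (jordan a (jordan a a)) x =
  oscale 3 (jordan (jordan a a) (jordan a x)).
Proof.
move=> ha hx.
have ra := represents_sherm_at [::] (herm_coords x ++ [::]) ha.
have rx := represents_sherm_at (herm_coords a) [::] hx.
have ra2 := represents_jordan ra ra; have rax := represents_jordan ra rx.
have rL := represents_jordan (represents_jordan ra ra2) rx.
have rT := represents_jordan ra (represents_jordan ra rax).
have rU := represents_jordan ra2 rax.
have := represents_eq0 (represents_add (represents_add rL (represents_add rT rT))
  (represents_opp (represents_add rU (represents_add rU rU)))) sherm_cube_defect_is0.
(* Jordan products are only matched syntactically here (by unification against [combine]):
   comparing two different ones up to conversion is prohibitively slow. *)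
have combine (c1 c2 c3 : R) T L U : c1 = 8 -> c2 = 8 -> c3 = 8 ->
    oscale c1 L + (oscale c2 T + oscale c2 T) - (oscale c3 U + (oscale c3 U + oscale c3 U)) = 0 ->
    oscale 2 T + L = oscale 3 U.
  by move=> -> -> -> E; apply/eqP; rewrite -subr_eq0 -(oscaler0 8^-1) -{}E; apply/eqP; omat_lin.
by apply: combine; lra.
Qed.

Lemma otr_jordanA a b c : hermitian a -> hermitian b -> hermitian c ->
  otr (jordan (jordan a b) c) = otr (jordan a (jordan b c)).
Proof.
move=> ha hb hc; pose env := herm_coords a ++ herm_coords b ++ herm_coords c ++ [::].
have ra : represents env (oscale 1 a) (sherm zvar) := represents_sherm_at [::] _ ha.
have rb : represents env (oscale 1 b) (sherm (fun k => zvar (27 + k))) :=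
  represents_sherm_at (herm_coords a) _ hb.
have rc : represents env (oscale 1 c) (sherm (fun k => zvar (54 + k))) :=
  represents_sherm_at (herm_coords a ++ herm_coords b) [::] hc.
have [hD hN _ _] := zeval_morph env.
have := zeval_eq0 env sherm_trace_assoc_defect_is0.
rewrite /trace_assoc_defect hD hN.
have := otr_represents (represents_jordan (represents_jordan ra rb) rc).
have := otr_represents (represents_jordan ra (represents_jordan rb rc)).
have combination (c1 c2 t1 t2 z1 z2 : R) : c1 = 4 -> c2 = 4 ->
    c2 * t2 = z2 -> c1 * t1 = z1 -> z1 - z2 = 0 -> t1 = t2.
  by move=> -> -> <- <-; lra.
by apply: combination; lra.
Qed.
End JordanIdentities.

(** * The orthogonal projection onto V_P *)

Section JordanProjection.
(* Jordan product, scaling and coordinates are variables, so that rewriting and lra never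
   compare two concrete Jordan products up to conversion. *)
Variables (R : realType) (I : Type) (jo : omat R -> omat R -> omat R)
  (sc : R -> omat R -> omat R) (coord : omat R -> I -> R).
Implicit Types (e A B W X Y : omat R) (l r : R).

Hypothesis coord_ext : forall A B, (forall c, coord A c = coord B c) -> A = B.
Hypothesis coordD : forall A B c, coord (A + B) c = coord A c + coord B c.
Hypothesis coordZ : forall r A c, coord (sc r A) c = r * coord A c.
Hypothesis joC : forall A B, jo A B = jo B A.
Hypothesis joDr : forall A B C, jo A (B + C) = jo A B + jo A C.
Hypothesis joZr : forall r A B, jo A (sc r B) = sc r (jo A B).
Hypothesis jo_Id3 : forall A, jo A (Id3 R) = A.
Hypothesis otr_sc : forall r A, otr (sc r A) = r * otr A.
Hypothesis hermitian_sc : forall r A, hermitian A -> hermitian (sc r A).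
Hypothesis hermitian_jo : forall A B, hermitian A -> hermitian B -> hermitian (jo A B).
Hypothesis otr_joA : forall A B C, hermitian A -> hermitian B -> hermitian C ->
  otr (jo (jo A B) C) = otr (jo A (jo B C)).
Hypothesis hermitian_otr_sqr_eq0 : forall A, hermitian A -> otr (jo A A) = 0 -> A = 0.
Hypothesis jo_cube : forall A X, hermitian A -> hermitian X ->
  sc 2 (jo A (jo A (jo A X))) + jo (jo A (jo A A)) X = sc 3 (jo (jo A A) (jo A X)).

Definition jinner A B := 2^-1 * otr (jo A B).
Definition jeigsp e l A := hermitian A /\ jo e A = sc l A.
Definition jVP e A :=
  (exists A0 A1, jeigsp e 0 A0 /\ jeigsp e 1 A1 /\ A = A0 + A1) /\ jinner A (Id3 R) = 0.
Definition jproj (V : omat R -> Prop) X : omat R :=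
  epsilon (inhabits 0) (fun Y => V Y /\ forall W, V W -> jinner (X - Y) W = 0).

Lemma coord0 c : coord 0 c = 0.
Proof. by have := coordD 0 0 c; rewrite addr0; lra. Qed.
Lemma coordN A c : coord (- A) c = - coord A c.
Proof. by have := coordD (- A) A c; rewrite addNr coord0; lra. Qed.

Ltac coord_lin := apply: coord_ext => c; rewrite ?(coordD, coordN, coordZ, coord0); lra.

Lemma jo0r A : jo A 0 = 0.
Proof. have -> : (0 : omat R) = sc 0 0 by coord_lin. by rewrite joZr; coord_lin. Qed.

Lemma joNr A B : jo A (- B) = - jo A B.
Proof.
apply: coord_ext => c; have := congr1 (coord^~ c) (joDr A (- B) B).
by rewrite addNr jo0r coordD coordN coord0; lra.
Qed.

Lemma joDl A B C : jo (A + B) C = jo A C + jo B C.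
Proof. by rewrite !(joC _ C) joDr. Qed.
Lemma joNl A B : jo (- A) B = - jo A B.
Proof. by rewrite !(joC _ B) joNr. Qed.
Lemma joZl r A B : jo (sc r A) B = sc r (jo A B).
Proof. by rewrite !(joC _ B) joZr. Qed.

Lemma jinnerB A B W : jinner (A - B) W = jinner A W - jinner B W.
Proof. by rewrite /jinner joDl joNl otrD otrN mulrBr. Qed.

Lemma jinner_self_eq0 A : hermitian A -> jinner A A = 0 -> A = 0.
Proof.
move=> hA /eqP; rewrite mulf_eq0 invr_eq0 pnatr_eq0 /= => /eqP.
exact: hermitian_otr_sqr_eq0.
Qed.

Lemma jprojE (V : omat R -> Prop) X Y :
  (forall A B, V A -> V B -> V (A - B)) -> (forall W, V W -> hermitian W) ->
  V Y -> (forall W, V W -> jinner (X - Y) W = 0) -> jproj V X = Y.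
Proof.
move=> Vsub Vherm VY XY; rewrite /jproj.
set P := fun Z => V Z /\ _.
have : P (epsilon (inhabits 0) P) by apply: epsilon_spec; exists Y.
move: (epsilon _ _) => Z [VZ XZ].
have VZY := Vsub _ _ VZ VY.
apply/eqP; rewrite -subr_eq0; apply/eqP/jinner_self_eq0; first exact: Vherm.
have E : (X - Y) - (X - Z) = Z - Y by rewrite opprB addrC addrA subrK.
by rewrite -{1}E jinnerB XY // XZ // subrr.
Qed.

Lemma jeigspB e l A B : jeigsp e l A -> jeigsp e l B -> jeigsp e l (A - B).
Proof.
move=> [hA eA] [hB eB]; split; first exact: hermitianB.
by rewrite joDr joNr eA eB; coord_lin.
Qed.

Lemma jVP_hermitian e W : jVP e W -> hermitian W.
Proof. by case=> [[W0 [W1 [[h0 _] [[h1 _] ->]]]] _]; apply: hermitianD. Qed.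

Lemma jVPB e A B : jVP e A -> jVP e B -> jVP e (A - B).
Proof.
move=> [[A0 [A1 [eA0 [eA1 ->]]]] iA] [[B0 [B1 [eB0 [eB1 ->]]]] iB]; split.
  exists (A0 - B0), (A1 - B1); split; [exact: jeigspB | split; first exact: jeigspB].
  by rewrite opprD addrACA.
by rewrite jinnerB iA iB subrr.
Qed.

Section Idempotent.
Variables e X : omat R.
Hypotheses (he : hermitian e) (ee : jo e e = e) (hX : hermitian X) (tX : otr X = 0).

Lemma jo_idem_cubic : jo e (jo e (jo e X)) = sc (3 / 2) (jo e (jo e X)) - sc 2^-1 (jo e X).
Proof.
have := jo_cube he hX; rewrite !ee => E.
apply: coord_ext => c; have := congr1 (coord^~ c) E.
by rewrite !(coordD, coordN, coordZ); lra.
Qed.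

Let Y := X + sc (- 4%:R) (jo e X) + sc 4%:R (jo e (jo e X)).

Lemma jVP_proj_formula : jVP e Y.
Proof.
have heX : hermitian (jo e X) by exact: hermitian_jo.
have heeX : hermitian (jo e (jo e X)) by exact: hermitian_jo.
split.
  exists (X - sc 3 (jo e X) + sc 2 (jo e (jo e X))), (sc 2 (jo e (jo e X)) - jo e X).
  split; last split.
  - split; first by apply: hermitianD; [apply: hermitianB => //|]; apply: hermitian_sc.
    by rewrite !(joDr, joNr, joZr) jo_idem_cubic; coord_lin.
  - split; first by apply: hermitianB => //; apply: hermitian_sc.
    by rewrite !(joDr, joNr, joZr) jo_idem_cubic; coord_lin.
  - by rewrite /Y; coord_lin.
have tr_eeX : otr (jo e (jo e X)) = otr (jo e X) by rewrite -otr_joA // ee.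
by rewrite /jinner jo_Id3 /Y !otrD !otr_sc tr_eeX tX; lra.
Qed.

Lemma proj_formula_perp W : jVP e W -> jinner (X - Y) W = 0.
Proof.
move=> VW; have hW := jVP_hermitian VW.
case: VW => [[W0 [W1 [[h0 e0] [[h1 e1] EW]]]] _].
have eW : jo e W = W1 by rewrite EW joDr e0 e1; coord_lin.
have adj A B : hermitian A -> hermitian B -> otr (jo (jo e A) B) = otr (jo A (jo e B)).
  by move=> hA hB; rewrite (joC e A) otr_joA.
have -> : X - Y = sc 4 (jo e X) - sc 4 (jo e (jo e X)) by rewrite /Y; coord_lin.
have heX : hermitian (jo e X) by exact: hermitian_jo.
have t1 : otr (jo (jo e X) W1) = otr (jo X W1) by rewrite adj // e1 joZr otr_sc mul1r.
have t2 : otr (jo (jo e X) W) = otr (jo X W1) by rewrite adj // eW.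
have t3 : otr (jo (jo e (jo e X)) W) = otr (jo X W1) by rewrite adj // eW t1.
by rewrite jinnerB /jinner !joZl !otr_sc t2 t3; lra.
Qed.

Lemma jproj_formula : jproj (jVP e) X = Y.
Proof.
apply: jprojE; [exact: jVPB | exact: jVP_hermitian | exact: jVP_proj_formula
  | exact: proj_formula_perp].
Qed.
End Idempotent.
End JordanProjection.

Section ProjectionFormula.
Variable R : realType.
Implicit Types (A B : omat R).

Definition omat_coord A (c : 'I_3 * 'I_3 * 'I_8) : R := nth 0 (oct_coords (A c.1.1 c.1.2)) c.2.

Lemma omat_coord_ext A B : (forall c, omat_coord A c = omat_coord B c) -> A = B.
Proof.
move=> h; apply/matrixP => i j; apply: oct_ext;
  [ exact: (h (i, j, @Ordinal 8 0 isT)) | exact: (h (i, j, @Ordinal 8 1 isT))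
  | exact: (h (i, j, @Ordinal 8 2 isT)) | exact: (h (i, j, @Ordinal 8 3 isT))
  | exact: (h (i, j, @Ordinal 8 4 isT)) | exact: (h (i, j, @Ordinal 8 5 isT))
  | exact: (h (i, j, @Ordinal 8 6 isT)) | exact: (h (i, j, @Ordinal 8 7 isT)) ].
Qed.

Lemma omat_coordD A B c : omat_coord (A + B) c = omat_coord A c + omat_coord B c.
Proof. by case: c => [[i j] [[|[|[|[|[|[|[|[|//]]]]]]]] ?]]; rewrite /omat_coord mxE. Qed.

Lemma omat_coordZ r A c : omat_coord (oscale r A) c = r * omat_coord A c.
Proof. by case: c => [[i j] [[|[|[|[|[|[|[|[|//]]]]]]]] ?]]; rewrite /omat_coord mxE. Qed.

Lemma oproj_VP (e X : omat R) : OP2 e -> h30 X ->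
  oproj (VP e) X = X + oscale (- 4%:R) (jordan e X) + oscale 4%:R (jordan e (jordan e X)).
Proof.
case=> he [ee _] [hX tX].
exact: (jproj_formula omat_coord_ext omat_coordD omat_coordZ (@jordanC R) (@jordanDr R)
  (@jordanZr R) (@jordan_Id3 R) (@otrZ R) (@hermitianZ R) (@hermitian_jordan R)
  (@otr_jordanA R) (@hermitian_otr_sqr_eq0 R) (@jordan_cube_identity R) he ee hX tX).
Qed.
End ProjectionFormula.

(** * Derivatives along curves *)

Section DerivativeOfPairs.
Local Open Scope classical_set_scope.
Variable R : realType.

Lemma cvg_is_derive (U : normedModType R) (f : R -> U) (x v : R) (d : U) :
  (fun h => h^-1 *: ((f \o shift x) (h *: v) - f x)) @ 0^' --> d -> is_derive x v f d.
Proof. by move=> fd; apply: DeriveDef; [apply/cvg_ex; exists d | exact: cvg_lim fd]. Qed.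

Lemma is_derive_cvg (U : normedModType R) (f : R -> U) (x v : R) (d : U) :
  is_derive x v f d -> (fun h => h^-1 *: ((f \o shift x) (h *: v) - f x)) @ 0^' --> d.
Proof. by case=> fx <-. Qed.

Lemma is_derive_pair (U V : normedModType R) (f : R -> U) (g : R -> V) (x v : R) df dg :
  is_derive x v f df -> is_derive x v g dg -> is_derive x v (fun t => (f t, g t)) (df, dg).
Proof. by move=> /is_derive_cvg fd /is_derive_cvg gd; apply: cvg_is_derive; apply: cvg_pair. Qed.

Lemma is_derive_fst (U V : normedModType R) (F : R -> U * V) (x v : R) d :
  is_derive x v F d -> is_derive x v (fun t => (F t).1) d.1.
Proof. by move=> /is_derive_cvg Fd; apply: cvg_is_derive; apply: cvg_comp Fd cvg_fst. Qed.

Lemma is_derive_snd (U V : normedModType R) (F : R -> U * V) (x v : R) d :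
  is_derive x v F d -> is_derive x v (fun t => (F t).2) d.2.
Proof. by move=> /is_derive_cvg Fd; apply: cvg_is_derive; apply: cvg_comp Fd cvg_snd. Qed.

Definition product_rule (A : normedModType R) (mul : A -> A -> A) :=
  forall (f g : R -> A) x v df dg, is_derive x v f df -> is_derive x v g dg ->
  is_derive x v (fun t => mul (f t) (g t)) (mul (f x) dg + mul df (g x)).

Definition commutes_with_derive (A : normedModType R) (cj : A -> A) :=
  forall (f : R -> A) x v df, is_derive x v f df -> is_derive x v (fun t => cj (f t)) (cj df).

Lemma cd_product_rule (A : normedModType R) (mul : A -> A -> A) (cj : A -> A) :
  product_rule mul -> commutes_with_derive cj -> product_rule (cd_mul mul cj).
Proof.
move=> dmul dcj F G x v dF dG dFG dGG.
have [F1 F2] := (is_derive_fst dFG, is_derive_snd dFG).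
have [G1 G2] := (is_derive_fst dGG, is_derive_snd dGG).
have := is_derive_pair
  (is_deriveB (dmul _ _ _ _ _ _ F1 G1) (dmul _ _ _ _ _ _ (dcj _ _ _ _ G2) F2))
  (is_deriveD (dmul _ _ _ _ _ _ G2 F1) (dmul _ _ _ _ _ _ F2 (dcj _ _ _ _ G1))).
congr is_derive; rewrite /cd_mul /=; congr (_, _).
  by rewrite opprD [- _ + - _]addrC addrACA.
by rewrite [X in X + _]addrC addrACA.
Qed.

Lemma cd_commutes_with_derive (A : normedModType R) (cj : A -> A) :
  commutes_with_derive cj -> commutes_with_derive (cd_conj cj).
Proof.
move=> dcj F x v dF dFG.
exact: is_derive_pair (dcj _ _ _ _ (is_derive_fst dFG)) (is_deriveN (is_derive_snd dFG)).
Qed.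

Lemma mulO_product_rule : product_rule (@mulO R).
Proof.
have dR : product_rule ( *%R : R -> R -> R).
  move=> f g x v df dg fd gd.
  have -> : f x * dg + df * g x = f x *: dg + g x *: df by rewrite [df * _]mulrC.
  exact: is_deriveM.
have dcjR : commutes_with_derive (fun r : R => r) by [].
have dcjC := cd_commutes_with_derive dcjR.
have dC : product_rule (@mulC' R) by exact: cd_product_rule dR dcjR.
have dH : product_rule (@mulH R) by exact: cd_product_rule dC dcjC.
exact: cd_product_rule dH (cd_commutes_with_derive dcjC).
Qed.
End DerivativeOfPairs.

Section CurveDerivatives.
Variable R : realType.
Implicit Types (f g : R -> omat R) (D Df Dg M : omat R).

Lemma curve_deriv0_ext f g D : (forall t, f t = g t) -> curve_deriv0 g D -> curve_deriv0 f D.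
Proof. by move=> fg; rewrite (funext fg). Qed.

Lemma curve_deriv0_eq f D D' : curve_deriv0 f D -> D = D' -> curve_deriv0 f D'.
Proof. by move=> fD <-. Qed.

Lemma curve_deriv0_cst M : curve_deriv0 (fun=> M) 0.
Proof. by move=> i j; rewrite mxE; exact: is_derive_cst. Qed.

Lemma curve_deriv0D f g Df Dg : curve_deriv0 f Df -> curve_deriv0 g Dg ->
  curve_deriv0 (fun t => f t + g t) (Df + Dg).
Proof.
move=> fD gD i j; rewrite mxE.
have -> : (fun t => (f t + g t) i j) = (fun t => f t i j + g t i j).
  by apply: funext => t; rewrite mxE.
exact: is_deriveD.
Qed.

Lemma curve_deriv0Z r f Df : curve_deriv0 f Df ->
  curve_deriv0 (fun t => oscale r (f t)) (oscale r Df).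
Proof.
move=> fD i j; rewrite mxE.
have -> : (fun t => oscale r (f t) i j) = (fun t => r *: f t i j).
  by apply: funext => t; rewrite mxE.
exact: is_deriveZ.
Qed.

Lemma curve_deriv0_omul f g Df Dg : curve_deriv0 f Df -> curve_deriv0 g Dg ->
  curve_deriv0 (fun t => omul (f t) (g t)) (omul (f 0) Dg + omul Df (g 0)).
Proof.
move=> fD gD i j.
have -> : (fun t => omul (f t) (g t) i j) = \sum_(k < 3) (fun t => mulO (f t i k) (g t k j)).
  by apply: funext => t; rewrite mxE fct_sumE.
rewrite !mxE -big_split; apply: is_derive_sum => k.
exact: mulO_product_rule (fD i k) (gD k j).
Qed.

Lemma curve_deriv0_jordan f g Df Dg : curve_deriv0 f Df -> curve_deriv0 g Dg ->
  curve_deriv0 (fun t => jordan (f t) (g t)) (jordan (f 0) Dg + jordan Df (g 0)).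
Proof.
move=> fD gD; apply: curve_deriv0_eq
  (curve_deriv0Z 2^-1 (curve_deriv0D (curve_deriv0_omul fD gD) (curve_deriv0_omul gD fD))) _.
by rewrite /jordan -oscaleD [omul (g 0) Df + _]addrC addrACA.
Qed.

Lemma curve_deriv0_jordanl f Df M : curve_deriv0 f Df ->
  curve_deriv0 (fun t => jordan (f t) M) (jordan Df M).
Proof.
move=> fD; apply: curve_deriv0_eq (curve_deriv0_jordan fD (curve_deriv0_cst M)) _.
by rewrite jordan0r add0r.
Qed.

Lemma curve_deriv0_addl M f Df : curve_deriv0 f Df -> curve_deriv0 (fun t => M + f t) Df.
Proof.
by move=> fD; apply: curve_deriv0_eq (curve_deriv0D (curve_deriv0_cst M) fD) _; rewrite add0r.
Qed.
End CurveDerivatives.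

Theorem proposition2p2 (R : realType) (P Z X : omat R) (gamma : R -> omat R) :
  OP2 P -> tangentOP2 P Z -> h30 X ->
  (forall t, OP2 (gamma t)) -> gamma 0 = P -> curve_deriv0 gamma Z ->
  curve_deriv0 (fun t => oproj (@VP R (gamma t)) X)
    (oscale (- 4%:R) (jordan Z X) + oscale 4%:R (jordan Z (jordan P X))
       + oscale 4%:R (jordan P (jordan Z X))).
Proof.
move=> _ _ hX OP2gamma gamma0 dgamma.
apply: (curve_deriv0_ext (fun t => oproj_VP (OP2gamma t) hX)).
have dJ := curve_deriv0_jordanl X dgamma.
have dJJ := curve_deriv0_jordan dgamma dJ.
apply: curve_deriv0_eq
  (curve_deriv0D (curve_deriv0_addl X (curve_deriv0Z _ dJ)) (curve_deriv0Z _ dJJ)) _.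
cbv beta; rewrite gamma0.
have rearrange r U V W :
    oscale r U + oscale 4%:R (V + W) = oscale r U + oscale 4%:R W + oscale 4%:R V.
  by rewrite oscaleD addrA addrAC.
exact: rearrange.
Qed.
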